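(* There exist constants $r,C>1$ such that for every $q\ge 2$ there exist $n\in\mathbb{N}$, $p\in(0,1)$ and a function $f\colon(\{0,1\}^n,\mu_p)\to\mathbb{R}$ such that (a) $\|f_{S\to x}\|_2\le r^{|S|}\|f\|_2$ for all $S\subseteq[n]$ and all $x\in\{0,1\}^S$, and (b) $\|T_\rho f\|_q>\|f\|_2$ for all $\rho>\frac{C\log q}{rq}$ (with $\rho\le 1$).
   Context: $\mu_p$ is the $p$-biased product measure on $\{0,1\}^n$, $\mu_p(x)=p^{|\{i:x_i=1\}|}(1-p)^{|\{i:x_i=0\}|}$; all norms are with respect to $\mu_p$. $f_{S\to x}(y)=f(x,y)$ is the restriction. The noise operator $T_\rho f(x)=\mathbb{E}_y[f(y)]$, where $y$ keeps each coordinate of $x$ independently with probability $\rho$ and otherwise resamples it from the $p$-biased distribution on $\{0,1\}$. $\log$ is the natural logarithm. *)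

From mathcomp Require Import all_boot all_order all_algebra.
From mathcomp Require Import reals exp Rstruct.
From Stdlib Require Import Rdefinitions.
Set Implicit Arguments. Unset Strict Implicit. Unset Printing Implicit Defensive.
Import Order.TTheory GRing.Theory Num.Theory.
Local Open Scope ring_scope.

Definition cube (n : nat) := {ffun 'I_n -> bool}.

Definition bw (p : R) (b : bool) : R := if b then p else 1 - p.

Definition mu (n : nat) (p : R) (x : cube n) : R := \prod_(i < n) bw p (x i).

Definition lqnorm (n : nat) (p q : R) (f : cube n -> R) : R :=
  powR (\sum_(x : cube n) mu p x * powR `|f x| q) (q^-1).

(* L^2 norm of the restriction f_{S -> x} : a function of the coordinates
   y in {0,1}^{[n] \ S}, under the p-biased measure on [n] \ S.  The points
   y of {0,1}^{[n]\S} are identified with the z in {0,1}^n that agree with x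
   on S; only the values of x on S matter. *)
Definition restr_l2norm (n : nat) (p : R) (S : {set 'I_n}) (x : cube n)
  (f : cube n -> R) : R :=
  powR (\sum_(z : cube n | [forall i in S, z i == x i])
          (\prod_(i < n | i \notin S) bw p (z i)) * powR `|f z| 2) (2^-1).

(* Noise operator: T_rho f (x) = E_y f(y), y_i = x_i with prob. rho, otherwise
   resampled from the p-biased distribution; transition kernel is the product
   of rho*[x_i = y_i] + (1-rho)*bw p y_i. *)
Definition noise (n : nat) (p rho : R) (f : cube n -> R) (x : cube n) : R :=
  \sum_(y : cube n)
     (\prod_(i < n) (rho * (x i == y i)%:R + (1 - rho) * bw p (y i))) * f y.

From mathcomp Require Import all_boot all_order all_algebra.
From mathcomp Require Import reals exp Rstruct.
From Stdlib Require Import Rdefinitions.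
From mathcomp Require Import ring lra sequences.
Import Order.TTheory GRing.Theory Num.Theory.
Local Open Scope ring_scope.

(* Take n = 1, p = 1/q and f = 1 + 1_{x_1 = 1}.  Then ||f||_2^2 = 1 + 3/q, so
   ||f||_2^q <= e^{3/2} <= 16 stays bounded, while every restriction of f is at
   most 2 <= 2 ||f||_2.  On the other hand T_rho f(1) >= 1 + rho, hence
   ||T_rho f||_q^q >= (1 + rho)^q / q; once rho q > 10 log q we have
   (1 + rho)^q > q^5, so this exceeds q^4 >= 16.  This gives r = 2, C = 20. *)

Section RealInequalities.
Context {K : realType}.

Lemma powR_norm2 (a : K) : powR `|a| 2 = a ^+ 2.
Proof. by rewrite (@powR_mulrn K _ 2) // real_normK ?num_real. Qed.

Lemma expR_le_invr1B (x : K) : x < 1 -> expR x <= (1 - x)^-1.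
Proof.
move=> x_lt1; rewrite -[expR x]invrK lef_pV2 ?posrE ?invr_gt0 ?expR_gt0 ?subr_gt0 //.
by rewrite -expRN; apply: le_trans (expR_ge1Dx _); lra.
Qed.

Lemma expR_3half_le16 : expR (3 / 2 : K) <= 16.
Proof.
have -> : (3 / 2 : K) = 2%:R * (3 / 4) by lra.
have e : expR (3 / 4 : K) <= 4.
  have := @expR_le_invr1B (3 / 4); have -> : (1 - 3 / 4 : K) = 4^-1 by lra.
  by rewrite invrK; apply; lra.
by rewrite expRM_natl expr2; have := expR_gt0 (3 / 4 : K); nra.
Qed.

(* Apply [ln (1 + y) <= y] to y = 1/(1 + x) - 1: ln (1 + x) >= 1 - 1/(1 + x). *)
Lemma half_le_ln1D (x : K) : 0 <= x <= 1 -> x / 2 <= ln (1 + x).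
Proof.
move=> /andP[x_ge0 x_le1].
have x1_gt0 : 0 < 1 + x by lra.
have hV : (1 + x)^-1 <= 1 - x / 2 by rewrite -[_^-1]mul1r ler_pdivrMr; nra.
have := @le_ln1Dx K ((1 + x)^-1 - 1).
rewrite addrCA subrr addr0 lnV ?posrE //.
have : -1 < (1 + x)^-1 - 1 by have := invr_gt0 (1 + x); rewrite x1_gt0; lra.
move=> /[swap] /[apply]; lra.
Qed.

Lemma powR_1D3V_le16 (q : K) : 0 < q -> powR (1 + 3 / q) (q / 2) <= 16.
Proof.
move=> q_gt0; have h3q : 0 < 3 / q by rewrite divr_gt0.
rewrite /powR gt_eqF; last lra.
apply: le_trans expR_3half_le16; rewrite ler_expR.
have -> : (3 / 2 : K) = q / 2 * (3 / q) by field; lra.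
by rewrite ler_pM2l ?divr_gt0 //; apply: le_ln1Dx; lra.
Qed.

Lemma sixteen_lt_powR1D (q rho : K) :
  2 <= q -> rho <= 1 -> 10 * ln q < q * rho -> 16 < q^-1 * powR (1 + rho) q.
Proof.
move=> q_ge2 rho_le1 hrho.
have q_gt0 : 0 < q by lra.
have lnq_gt0 : 0 < ln q by apply: ln_gt0; lra.
have rho_gt0 : 0 < rho by nra.
have q5_lt : q ^+ 5 < powR (1 + rho) q.
  rewrite -[q ^+ 5]lnK ?posrE ?exprn_gt0 // /powR gt_eqF; last lra.
  rewrite ltr_expR lnXn // -mulr_natr.
  have := @half_le_ln1D rho; rewrite (ltW rho_gt0) rho_le1 => /(_ isT); nra.
have q4 : 16 <= q ^+ 4.
  have q2_ge4 : 4 <= q * q by nra.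
  have -> : q ^+ 4 = (q * q) * (q * q) by rewrite !exprS expr0 mulr1 !mulrA.
  nra.
apply: (le_lt_trans q4).
by rewrite -(mulKf (lt0r_neq0 q_gt0) (q ^+ 4)) -exprS ltr_pM2l ?invr_gt0.
Qed.

Lemma powR_half_lt_powRV (a b q : K) :
  0 < q -> 0 <= a -> 0 <= b -> powR a (q / 2) < b -> powR a 2^-1 < powR b q^-1.
Proof.
move=> q_gt0 a_ge0 b_ge0 hab.
have -> : (2^-1 : K) = q / 2 * q^-1 by rewrite mulrAC mulfV ?gt_eqF // mul1r.
by rewrite powRrM; apply: gt0_ltr_powR; rewrite ?invr_gt0 ?nnegrE ?powR_ge0.
Qed.

End RealInequalities.

Lemma restr_l2norm_set0 (n : nat) (p : R) (x : cube n) (f : cube n -> R) :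
  restr_l2norm p set0 x f = lqnorm p 2 f.
Proof.
rewrite /restr_l2norm /lqnorm (eq_bigl predT); last first.
  by move=> z; apply/forall_inP => i; rewrite in_set0.
by congr powR; apply: eq_bigr => z _; congr (_ * _); apply: eq_bigl => i; rewrite in_set0.
Qed.

Lemma restr_l2norm_setT (n : nat) (p : R) (x : cube n) (f : cube n -> R) :
  restr_l2norm p setT x f = `|f x|.
Proof.
rewrite /restr_l2norm (eq_bigl (pred1 x)); last first.
  move=> z; apply/forall_inP/eqP => [zx | -> //]; apply/ffunP => i.
  by apply/eqP/zx; rewrite in_setT.
rewrite big_pred1_eq big_pred0; last by move=> i; rewrite in_setT.
by rewrite mul1r -powRrM mulfV ?pnatr_eq0 // powRr1.
Qed.

Lemma set_ord1 (S : {set 'I_1}) : S = set0 \/ S = setT.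
Proof.
case: (boolP (ord0 \in S)) => hS; [right | left]; apply/setP => i;
  by rewrite (ord1 i) ?in_setT ?in_set0 ?(negbTE hS).
Qed.

Lemma sum_cube1 (F : cube 1 -> R) :
  \sum_(x : cube 1) F x = F [ffun=> true] + F [ffun=> false].
Proof.
rewrite (reindex (fun b : bool => [ffun=> b] : cube 1)) /= ?big_bool //.
exists (fun x : cube 1 => x ord0) => [b _ | x _]; first by rewrite ffunE.
by apply/ffunP => i; rewrite ffunE (ord1 i).
Qed.

Lemma mu_cube1 (p : R) (b : bool) : mu p ([ffun=> b] : cube 1) = bw p b.
Proof. by rewrite /mu big_ord1 ffunE. Qed.

Definition one_plus_ind (x : cube 1) : R := if x ord0 then 2 else 1.

Lemma lqnorm2_one_plus_ind (p : R) :
  lqnorm p 2 one_plus_ind = powR (1 + 3 * p) 2^-1.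
Proof.
rewrite /lqnorm sum_cube1 !mu_cube1 /one_plus_ind !ffunE !powR_norm2 /bw.
by congr powR; lra.
Qed.

Lemma noise_one_plus_ind_true (p rho : R) :
  noise p rho one_plus_ind [ffun=> true] = 1 + rho + (1 - rho) * p.
Proof. by rewrite /noise sum_cube1 !big_ord1 /one_plus_ind !ffunE /= /bw; lra. Qed.

Lemma restr_l2norm_one_plus_ind (p : R) (S : {set 'I_1}) (x : cube 1) : 0 <= p ->
  restr_l2norm p S x one_plus_ind <= 2 ^+ #|S| * lqnorm p 2 one_plus_ind.
Proof.
move=> p_ge0; case: (set_ord1 S) => ->.
  by rewrite restr_l2norm_set0 cards0 expr0 mul1r.
rewrite restr_l2norm_setT cardsT card_ord expr1 lqnorm2_one_plus_ind.
have norm_ge1 : 1 <= powR (1 + 3 * p) 2^-1.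
  have := @ge0_ler_powR R 2^-1 _ 1 (1 + 3 * p); rewrite powR1.
  by apply; rewrite ?nnegrE ?invr_ge0; lra.
by rewrite /one_plus_ind; case: (x ord0); rewrite ger0_norm; lra.
Qed.

Lemma lqmass_noise_one_plus_ind_ge (p rho q : R) :
  0 <= p -> p <= 1 -> 0 <= rho -> rho <= 1 -> 0 <= q ->
  p * powR (1 + rho) q <= \sum_(x : cube 1) mu p x * powR `|noise p rho one_plus_ind x| q.
Proof.
move=> p_ge0 p_le1 rho_ge0 rho_le1 q_ge0.
rewrite sum_cube1 !mu_cube1 noise_one_plus_ind_true /bw.
have rest_ge0 : 0 <= (1 - p) * powR `|noise p rho one_plus_ind [ffun=> false]| q.
  by rewrite mulr_ge0 ?powR_ge0 ?subr_ge0.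
suff : p * powR (1 + rho) q <= p * powR `|1 + rho + (1 - rho) * p| q by lra.
rewrite ler_wpM2l // ger0_norm; last nra.
apply: ge0_ler_powR; rewrite ?nnegrE; nra.
Qed.

Theorem mainTheorem2 :
  exists r C : R, 1 < r /\ 1 < C /\
  forall q : R, 2 <= q ->
  exists (n : nat) (p : R) (f : cube n -> R),
    0 < p < 1 /\
    (forall (S : {set 'I_n}) (x : cube n),
        restr_l2norm p S x f <= r ^+ #|S| * lqnorm p 2 f) /\
    (forall rho : R, C * ln q / (r * q) < rho -> rho <= 1 ->
        lqnorm p q (noise p rho f) > lqnorm p 2 f).
Proof.
exists 2, 20; split; first lra; split; first lra.
move=> q q_ge2; have q_gt0 : 0 < q by lra.
have p_gt0 : 0 < q^-1 by rewrite invr_gt0.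
have p_lt1 : q^-1 < 1 by rewrite invf_lt1 //; lra.
exists 1%N, q^-1, one_plus_ind; split; first by rewrite p_gt0 p_lt1.
split=> [S x | rho hrho rho_le1]; first exact/restr_l2norm_one_plus_ind/ltW.
have lnq_ge0 : 0 <= ln q by apply: ln_ge0; lra.
have lnq_lt : 10 * ln q < q * rho by move: hrho; rewrite ltr_pdivrMr; nra.
have rho_ge0 : 0 <= rho by nra.
have mass_ge := @lqmass_noise_one_plus_ind_ge _ _ q
  (ltW p_gt0) (ltW p_lt1) rho_ge0 rho_le1 (ltW q_gt0).
have pow_lt_mass := le_lt_trans (powR_1D3V_le16 q q_gt0)
  (sixteen_lt_powR1D q rho q_ge2 rho_le1 lnq_lt).
rewrite lqnorm2_one_plus_ind /lqnorm; apply: powR_half_lt_powRV => //.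
- by apply: addr_ge0; rewrite ?mulr_ge0 // ltW.
- by apply: le_trans mass_ge; rewrite mulr_ge0 ?powR_ge0 // ltW.
- exact: lt_le_trans pow_lt_mass mass_ge.
Qed.
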